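(* Let $q = 2^m$ and let $C \subseteq \mathbb{F}_q^n$ be a linear code. Then $C$ is GI-reducible if and only if $C \cap C^\perp = \{0\}$ (with respect to the standard inner product).
   Context: Vectors are row vectors; $I$ and $J$ are the $n\times n$ identity and all-ones matrices. For symmetric $M$, a code $C$ is $M$-LCD if $GMG^T$ is nonsingular for a generator matrix $G$ of $C$, and then $\Pi_{C,M} := MG^T(GMG^T)^{-1}G$. Codes $C_1,C_2$ are permutation-equivalent ($C_1\cong C_2$) if $C_2 = C_1P$ for a permutation matrix $P$; matrices satisfy $A_1 \cong A_2$ if $A_2 = P^TA_1P$ for a permutation matrix $P$. A code $C$ is GI-reducible if there is a nondegenerate $M = aI + bJ$ ($a,b\in\mathbb{F}_q$, $a\neq0$, $a+nb\neq0$) such that every code $CP$ ($P$ a permutation matrix) is $M$-LCD and, for all $C_1, C_2 \in \{CP\}$, $C_1\cong C_2 \iff \Pi_{C_1,M}\cong\Pi_{C_2,M}$. *)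

From HB Require Import structures.
From mathcomp Require Import all_boot all_order all_algebra all_fingroup all_field.
Set Implicit Arguments. Unset Strict Implicit. Unset Printing Implicit Defensive.
Import GRing.Theory.
Local Open Scope ring_scope.

(* A linear code C <= F^n is represented by a square matrix whose row space
   (mxalgebra) is C.  Its generator matrix is row_base C (rows form a basis). *)
Section Codes.
Variables (F : fieldType) (n : nat).

Definition genmx (C : 'M[F]_n) : 'M[F]_(\rank C, n) := row_base C.

Definition is_LCD (M C : 'M[F]_n) : bool :=
  (genmx C *m M *m (genmx C)^T) \in unitmx.

Definition Pi (C M : 'M[F]_n) : 'M[F]_n :=
  M *m (genmx C)^T *m invmx (genmx C *m M *m (genmx C)^T) *m genmx C.

Definition code_perm (C : 'M[F]_n) (s : 'S_n) : 'M[F]_n := C *m perm_mx s.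

Definition code_equiv (C1 C2 : 'M[F]_n) : Prop :=
  exists s : 'S_n, (C2 == C1 *m perm_mx s)%MS.

Definition mx_equiv (A1 A2 : 'M[F]_n) : Prop :=
  exists s : 'S_n, A2 = (perm_mx s)^T *m A1 *m perm_mx s.

Definition Jmx : 'M[F]_n := const_mx 1.

Definition GI_reducible (C : 'M[F]_n) : Prop :=
  exists a b : F,
    [/\ a != 0, a + n%:R * b != 0 &
      let M := a%:M + b *: Jmx in
      (forall s : 'S_n, is_LCD M (code_perm C s)) /\
      (forall s1 s2 : 'S_n,
         code_equiv (code_perm C s1) (code_perm C s2) <->
         mx_equiv (Pi (code_perm C s1) M) (Pi (code_perm C s2) M))].

(* dual code w.r.t. the standard inner product <u,v> = u v^T:
   C^perp = { u | u *m C^T = 0 } = row space of kermx C^T *)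
Definition dual_code (C : 'M[F]_n) : 'M[F]_n := kermx C^T.

End Codes.

From Pilot Require Import Defs.
From HB Require Import structures.
From mathcomp Require Import all_boot all_order all_algebra all_fingroup all_field.
Set Implicit Arguments. Unset Strict Implicit. Unset Printing Implicit Defensive.
Import GRing.Theory.
Local Open Scope ring_scope.

(* In characteristic 2 a self-orthogonal vector h has (sum_i h_i)^2 = sum_i h_i^2
   = h h^T = 0, so h J = 0: the Euclidean hull of C lies in its (aI + bJ)-hull,
   which is trivial as soon as C is (aI + bJ)-LCD.
   Conversely, if C has trivial hull take M = I.  Trivial hulls are preserved by
   permutations, and imply LCD; Pi_{C,I} is then the orthogonal projection onto
   C, i.e. the unique symmetric X with row space in C and C X = C.  Uniqueness
   gives Pi_{CP,I} = P^T Pi_{C,I} P, and Pi_{C,I} recovers C as its row space. *)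

Section TrivialHull.
Variables (F : fieldType) (n : nat).
Implicit Types (C Q X Y : 'M[F]_n).

Definition trivial_hull C : bool := (C :&: dual_code C == (0 : 'M[F]_n))%MS.

Lemma trivial_hullP C :
  reflect (forall k (V : 'M[F]_(k, n)), (V <= C)%MS -> V *m C^T = 0 -> V = 0)
          (trivial_hull C).
Proof.
rewrite /trivial_hull; apply: (iffP idP) => [/eqmxP hull0 k V VC VCt | hull0].
  by apply: (@submx0null _ _ n); rewrite -hull0 sub_capmx VC; apply/sub_kermxP.
have -> : (C :&: dual_code C)%MS = 0.
  by apply: hull0 (capmxSl _ _) _; apply/sub_kermxP/capmxSr.
exact/eqmxP.
Qed.

Lemma perm_mx_orthogonal (s : 'S_n) :
  perm_mx s *m (perm_mx s)^T = 1%:M :> 'M[F]_n.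
Proof. by rewrite tr_perm_mx -perm_mxM mulgV perm_mx1. Qed.

Lemma trivial_hull_mul_orthogonal C Q : Q *m Q^T = 1%:M ->
  trivial_hull C -> trivial_hull (C *m Q).
Proof.
move=> QQt /trivial_hullP hull0; apply/trivial_hullP => k V VCQ VCQt.
have VQt0 : V *m Q^T = 0.
  apply: hull0; last by rewrite -mulmxA -trmx_mul.
  by case/submxP: VCQ => Z ->; rewrite -!mulmxA QQt mulmx1 submxMl.
by rewrite -[V]mulmx1 -(mulmx1C QQt) mulmxA VQt0 mul0mx.
Qed.

Lemma LCD_Mhull_eq0 M C : is_LCD M C ->
  forall k (V : 'M[F]_(k, n)), (V <= C)%MS -> V *m M *m C^T = 0 -> V = 0.
Proof.
rewrite /is_LCD /Defs.genmx => LCD k V VC VMCt; set G := row_base C in LCD.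
have [GC CG] : (G <= C)%MS /\ (C <= G)%MS by rewrite /G !eq_row_base.
clearbody G.
case/submxP: (submx_trans VC CG) => U defV.
have UGMGt0 : U *m (G *m M *m G^T) = 0.
  rewrite !mulmxA -defV; case/submxP: GC => Z ->.
  by rewrite trmx_mul mulmxA VMCt mul0mx.
by rewrite defV -[U](mulmxK LCD) UGMGt0 !mul0mx.
Qed.

Lemma trivial_hull_LCD C : trivial_hull C -> is_LCD 1%:M C.
Proof.
move=> /trivial_hullP hull0; rewrite /is_LCD /Defs.genmx mulmx1 -row_free_unit.
apply/inj_row_free => v vGGt; apply: (row_free_inj (row_base_free C)).
rewrite /= mul0mx; set G := row_base C in vGGt *.
have [GC CG] : (G <= C)%MS /\ (C <= G)%MS by rewrite /G !eq_row_base.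
clearbody G; apply: hull0; first exact: submx_trans (submxMl _ _) GC.
case/submxP: CG => Y CY; rewrite [in C^T]CY trmx_mul mulmxA -(mulmxA v) vGGt.
by rewrite mul0mx.
Qed.

Section Char2.
Hypothesis char2 : 2 \in [pchar F].

Lemma selforthogonal_mulJ k (V : 'M[F]_(k, n)) :
  V *m V^T = 0 -> V *m Jmx F n = 0.
Proof.
move=> VVt; apply/matrixP => i j; rewrite !mxE.
under eq_bigr do rewrite mxE mulr1.
have : (\sum_l V i l) ^+ 2 = 0.
  rewrite -(pFrobenius_autE char2) rmorph_sum /=.
  transitivity ((V *m V^T) i i); last by rewrite VVt mxE.
  by rewrite mxE; apply: eq_bigr => l _; rewrite pFrobenius_autE expr2 mxE.
by move/eqP; rewrite expf_eq0 /= => /eqP.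
Qed.

Lemma hull_sub_Mhull (a b : F) C k (V : 'M[F]_(k, n)) :
  (V <= C)%MS -> V *m C^T = 0 -> V *m (a%:M + b *: Jmx F n) *m C^T = 0.
Proof.
move=> VC VCt; have VVt : V *m V^T = 0.
  by case/submxP: VC => Z {2}->; rewrite trmx_mul mulmxA VCt mul0mx.
rewrite mulmxDr mul_mx_scalar -scalemxAr (selforthogonal_mulJ VVt).
by rewrite scaler0 addr0 -scalemxAl VCt scaler0.
Qed.

End Char2.

Definition is_orthoproj C X : Prop := [/\ (X <= C)%MS, C *m X = C & X^T = X].

Lemma orthoproj_uniq C X Y : trivial_hull C ->
  is_orthoproj C X -> is_orthoproj C Y -> X = Y.
Proof.
move=> /trivial_hullP hull0 [XC CX Xt] [YC CY Yt].
apply/eqP; rewrite -subr_eq0; apply/eqP/hull0.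
  by rewrite addmx_sub // eqmx_opp.
by rewrite -[X - Y]trmxK -trmx_mul linearB /= Xt Yt mulmxBr CX CY subrr trmx0.
Qed.

Lemma orthoproj_Pi C : trivial_hull C -> is_orthoproj C (Pi C 1%:M).
Proof.
move=> hull0; have := trivial_hull_LCD hull0.
rewrite /is_LCD /Pi /Defs.genmx !mulmx1 mul1mx; set G := row_base C => GGt.
have [GC CG] : (G <= C)%MS /\ (C <= G)%MS by rewrite /G !eq_row_base.
clearbody G; split.
- exact: submx_trans (submxMl _ _) GC.
- have GPi : G *m (G^T *m invmx (G *m G^T) *m G) = G.
    by rewrite !mulmxA mulmxV // mul1mx.
  by case/submxP: CG => Y CY; rewrite {1}CY -mulmxA GPi; exact: esym CY.
- by rewrite !trmx_mul trmxK trmx_inv trmx_mul trmxK mulmxA.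
Qed.

Lemma orthoproj_eqmx C1 C2 X :
  (C1 :=: C2)%MS -> is_orthoproj C1 X -> is_orthoproj C2 X.
Proof.
move=> eqC [XC CX Xt]; split=> //; first by rewrite -eqC.
have /submxP[Y ->] : (C2 <= C1)%MS by rewrite eqC.
by rewrite -mulmxA CX.
Qed.

Lemma orthoproj_mul_orthogonal C X Q : Q *m Q^T = 1%:M ->
  is_orthoproj C X -> is_orthoproj (C *m Q) (Q^T *m X *m Q).
Proof.
move=> QQt [XC CX Xt]; split.
- by apply: submxMr; apply: submx_trans (submxMl _ _) XC.
- by rewrite !mulmxA -(mulmxA C) QQt mulmx1 CX.
- by rewrite !trmx_mul trmxK Xt mulmxA.
Qed.

Lemma eqmx_orthoproj C X : is_orthoproj C X -> (X :=: C)%MS.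
Proof. by case=> XC CX _; apply/eqmxP; rewrite XC -{1}CX submxMl. Qed.

Lemma Pi_orthogonal_equiv C1 C2 Q : Q *m Q^T = 1%:M ->
  trivial_hull C1 -> trivial_hull C2 ->
  (C2 == C1 *m Q)%MS <-> Pi C2 1%:M = Q^T *m Pi C1 1%:M *m Q.
Proof.
move=> QQt hull1 hull2.
have PiQ := orthoproj_mul_orthogonal QQt (orthoproj_Pi hull1).
split=> [/eqmxP eqC | eqPi].
  apply: orthoproj_uniq hull2 (orthoproj_Pi hull2) _.
  exact: orthoproj_eqmx (eqmx_sym eqC) PiQ.
apply/eqmxP; apply: eqmx_trans (eqmx_sym (eqmx_orthoproj (orthoproj_Pi hull2))) _.
by rewrite eqPi; apply: eqmx_orthoproj PiQ.
Qed.

End TrivialHull.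

Theorem mainTheorem5 (F : finFieldType) (m : nat) (hq : #|F| = (2 ^ m)%N)
  (n : nat) (C : 'M[F]_n) :
  GI_reducible C <-> (C :&: dual_code C == (0 : 'M[F]_n))%MS.
Proof.
split.
- have char2 : 2 \in [pchar F] by apply: card_finPcharP hq _.
  case=> a [b [_ _ [LCD _]]]; apply/trivial_hullP => k V VC VCt.
  have := LCD 1%g; rewrite /code_perm perm_mx1 mulmx1 => LCD1.
  exact: LCD_Mhull_eq0 LCD1 _ _ VC (hull_sub_Mhull char2 a b VC VCt).
- move=> hull0; exists 1, 0; split; rewrite ?mulr0 ?addr0 ?oner_neq0 //=.
  rewrite scale0r addr0.
  have hullP s : trivial_hull (code_perm C s).
    exact: trivial_hull_mul_orthogonal (perm_mx_orthogonal F s) hull0.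
  split=> [s | s1 s2]; first exact: trivial_hull_LCD.
  by split=> -[s E]; exists s;
    apply/(Pi_orthogonal_equiv (perm_mx_orthogonal F s) (hullP s1) (hullP s2)).
Qed.
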